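(* Let $X$ be a non-negative absolutely continuous random variable with CDF $F$ and PDF $f$, and let $T_1,T_2$ be the lifetimes of two coherent systems whose components are identically distributed as $X$, with distortion functions $q_1,q_2$, so that $T_i$ has CDF $F_{T_i}(x)=q_i(F(x))$ and PDF $f_{T_i}(x)=q_i'(F(x))f(x)$, $i=1,2$. Let $0<\alpha<\infty$, $\alpha\ne1$, $\beta>0$, put $\psi_{\alpha,i}(u)=f_{T_i}^\alpha(F_{T_i}^{-1}(u))$ for $0\le u\le1$, and $$\gamma_{1,\alpha}=\Big(\inf_{u\in(0,1)}\frac{\psi_{\alpha,2}(q_2(u))}{\psi_{\alpha,1}(q_1(u))}\Big)^{\beta-1},\qquad \gamma_{2,\alpha}=\Big(\sup_{u\in(0,1)}\frac{\psi_{\alpha,2}(q_2(u))}{\psi_{\alpha,1}(q_1(u))}\Big)^{\beta-1}.$$ Then (A) $\gamma_{1,\alpha}R^\alpha_\beta(T_1)\le R^\alpha_\beta(T_2)\le \gamma_{2,\alpha}R^\alpha_\beta(T_1)$ for $\{\alpha>1,\beta\le1\}$ or $\{0<\alpha<1,\beta\ge1\}$; (B) $\gamma_{1,\alpha}R^\alpha_\beta(T_1)\ge R^\alpha_\beta(T_2)\ge \gamma_{2,\alpha}R^\alpha_\beta(T_1)$ for $\{\alpha>1,\beta\ge1\}$ or $\{0<\alpha<1,\beta\le1\}$.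
   Context: For a non-negative absolutely continuous random variable $Z$ with PDF $h$, the Rényi information generating function is $R^\alpha_\beta(Z)=\frac{1}{1-\alpha}\left(\int_0^\infty h^\alpha(x)\,dx\right)^{\beta-1}$; all integrals are assumed finite and the infimum and supremum are assumed finite and positive. A distortion function is a continuous increasing (differentiable) function $q:[0,1]\to[0,1]$ with $q(0)=0$, $q(1)=1$. Quantile functions are $F^{-1}(u)=\inf\{x:F(x)\ge u\}$. *)

From HB Require Import structures.
From mathcomp Require Import all_boot all_order all_algebra.
From mathcomp Require Import all_classical all_reals all_analysis.
Set Implicit Arguments. Unset Strict Implicit. Unset Printing Implicit Defensive.
Import Order.TTheory GRing.Theory Num.Theory.
Import numFieldNormedType.Exports.
Local Open Scope classical_set_scope.
Local Open Scope ring_scope.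

Section Defs.
Variable R : realType.

Definition is_nonneg_pdf (f : R -> R) : Prop :=
  measurable_fun setT f /\ (forall x, 0 <= f x) /\ (forall x, x < 0 -> f x = 0) /\
  (@lebesgue_measure R).-integrable setT (EFin \o f) /\
  Rintegral (@lebesgue_measure R) setT f = 1.

Definition cdf_of (f : R -> R) (x : R) : R :=
  Rintegral (@lebesgue_measure R) `]-oo, x]%classic f.

Definition quantile (G : R -> R) (u : R) : R := inf [set x | u <= G x].

Definition distortion (q : R -> R) : Prop :=
  q 0 = 0 /\ q 1 = 1 /\
  {within `[0, 1], continuous q} /\
  {in `[0, 1]&, forall x y, x < y -> q x < q y} /\
  (forall u, 0 <= u <= 1 -> 0 <= q u <= 1) /\
  (forall u, 0 < u < 1 -> derivable q u 1).

Definition sys_cdf (q f : R -> R) (x : R) : R := q (cdf_of f x).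
Definition sys_pdf (q f : R -> R) (x : R) : R := derive1 q (cdf_of f x) * f x.

Definition renyi_igf (alpha beta : R) (h : R -> R) : R :=
  (1 - alpha)^-1 *
  (Rintegral (@lebesgue_measure R) `[0, +oo[%classic (fun x => h x `^ alpha))
    `^ (beta - 1).

Definition psi (alpha : R) (G h : R -> R) (u : R) : R :=
  (h (quantile G u)) `^ alpha.

End Defs.

From HB Require Import structures.
From mathcomp Require Import all_boot all_order all_algebra.
From mathcomp Require Import all_classical all_reals all_analysis.
From mathcomp Require Import ring lra.
Import Order.TTheory GRing.Theory Num.Theory.
Import numFieldNormedType.Exports.
Local Open Scope classical_set_scope.
Local Open Scope ring_scope.

(* With u = F x, the quantile of T_i at q_i(u) is F^-1(u) and F(F^-1(u)) = u
   because F is continuous, so psi_i(q_i(u)) = (q_i'(u) f(F^-1(u)))^alpha and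
   the factor f(F^-1(u))^alpha cancels in the ratio: ratio(F x) f_T1(x)^alpha =
   f_T2(x)^alpha whenever 0 < F x < 1.  As f vanishes a.e. on {F = 0} and on
   {F = 1}, integration over [0, +oo[ gives
   inf S * I_1 <= I_2 <= sup S * I_1 for I_i = int f_Ti^alpha.  Finally
   I |-> (1 - alpha)^-1 I^(beta - 1) is nondecreasing on ]0, +oo[ in case (A),
   nonincreasing in case (B), and turns a factor k of I into k^(beta - 1). *)

Section real_closed_sets.
Context {R : realType}.
Implicit Type A : set R.

Lemma closed_sup A : closed A -> A !=set0 -> has_ubound A -> A (sup A).
Proof.
move=> cA A0 ubA; apply: itv_closed_supremums => //.
by split; [exact: ub_le_sup | move=> u; exact: ge_sup].
Qed.

Lemma closed_inf A : closed A -> A !=set0 -> has_lbound A -> A (inf A).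
Proof.
move=> cA A0 lbA; apply: itv_closed_infimums => //.
by split; [exact: ge_inf | move=> l; exact: lb_le_inf].
Qed.

End real_closed_sets.

Section nonneg_Rintegral.
Context d (T : measurableType d) (R : realType).
Variable mu : {measure set T -> \bar R}.

Lemma Rintegral_ge0_eq0_negligible (D : set T) (h : T -> R) : measurable D ->
  mu.-integrable D (EFin \o h) -> (forall x, D x -> 0 <= h x) ->
  \int[mu]_(x in D) h x = 0 -> mu.-negligible (D `&` [set x | h x != 0]).
Proof.
move=> mD ih h_ge0 ih0.
have /(ae_eq_integral_abs mu mD (measurable_int _ ih)) [N [mN N0 DN]] :
    (\int[mu]_(x in D) `|(EFin \o h) x| = 0)%E.
  under eq_integral => x /[!inE] Dx do rewrite /= ger0_norm ?h_ge0//.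
  by rewrite -(fineK (integrable_fin_num mD ih)) [fine _]ih0.
exists N; split => //; apply: subset_trans DN => x [Dx hx] /=.
by move=> /(_ Dx) [] /eqP; apply/negP.
Qed.

Lemma ae_ge0_le_Rintegral (D : set T) (h1 h2 : T -> R) : measurable D ->
  mu.-integrable D (EFin \o h1) -> mu.-integrable D (EFin \o h2) ->
  (forall x, D x -> 0 <= h1 x) -> (forall x, D x -> 0 <= h2 x) ->
  {ae mu, forall x, D x -> h1 x <= h2 x} ->
  \int[mu]_(x in D) h1 x <= \int[mu]_(x in D) h2 x.
Proof.
move=> mD i1 i2 h1_ge0 h2_ge0 h12; rewrite -lee_fin /Rintegral.
rewrite (fineK (integrable_fin_num mD i1)) (fineK (integrable_fin_num mD i2)).
apply: ae_ge0_le_integral => //=.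
- exact: measurable_int i1.
- exact: measurable_int i2.
Qed.

End nonneg_Rintegral.

Section cdf_of_pdf.
Context {R : realType} {f : R -> R}.
Hypothesis hf : is_nonneg_pdf f.
Local Notation mu := (@lebesgue_measure R).
Local Notation F := (cdf_of f).

Lemma pdf_ge0 x : 0 <= f x.
Proof. by case: hf => _ []. Qed.

Lemma pdf_integrable (D : set R) : measurable D -> mu.-integrable D (EFin \o f).
Proof. by case: hf => _ [_ [_ [intf _]]] mD; exact: integrableS intf. Qed.

Lemma cdf_ofB a b : a <= b -> F b - F a = \int[mu]_(x in `]a, b]) f x.
Proof.
by move=> ab; apply: (@Rintegral_itvB R f (BInfty _ true) (BRight b) a) => //;
  exact: pdf_integrable.
Qed.

Lemma onem_cdf_of a : 1 - F a = \int[mu]_(x in `]a, +oo[) f x.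
Proof.
case: (hf) => _ [_ [_ [_ <-]]]; rewrite -set_itvNyy.
by apply: (@Rintegral_itvB R f (BInfty _ true) (BInfty _ false) a) => //;
  exact: pdf_integrable.
Qed.

Lemma cdf_of_ge0 x : 0 <= F x.
Proof. by apply: Rintegral_ge0 => y _; exact: pdf_ge0. Qed.

Lemma cdf_of_le1 x : F x <= 1.
Proof.
by rewrite -subr_ge0 onem_cdf_of; apply: Rintegral_ge0 => y _; exact: pdf_ge0.
Qed.

Lemma cdf_of_nondecreasing : {homo F : x y / x <= y}.
Proof.
by move=> a b ab; rewrite -subr_ge0 cdf_ofB//; apply: Rintegral_ge0 => y _;
  exact: pdf_ge0.
Qed.

Lemma cdf_of_lt0 x : x < 0 -> F x = 0.
Proof.
case: hf => _ [_ [f_lt0 _]] x_lt0; rewrite /cdf_of.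
rewrite (@eq_Rintegral _ _ _ _ _ (cst 0)) ?Rintegral_cst ?mul0r// => y.
by rewrite inE /= in_itv /= => yx; apply: f_lt0; exact: le_lt_trans yx x_lt0.
Qed.

Lemma cdf_of_continuous : continuous F.
Proof.
have [_ [_ [_ [intf _]]]] := hf.
move=> x; apply/cvgrPdist_lt => e e_gt0.
have [d [d_gt0 small]] := integral_normr_continuous intf e_gt0.
have small_incr a b : a <= b -> b - a < d -> F b - F a < e.
  move=> ab bad; rewrite cdf_ofB//.
  under eq_Rintegral => y _ do rewrite -[f y]ger0_norm ?pdf_ge0//.
  apply: small => //; apply: le_lt_trans.
    by rewrite le_eqVlt; apply/predU1P; left; exact: lebesgue_measure_itv.
  by rewrite /= lte_fin; case: ifPn => _; rewrite ?lte_fin// -EFinD lte_fin.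
near=> y.
have /andP[ydx yxd] : x - d < y < x + d.
  by rewrite -ltr_distlC; near: y; apply/nbhs_ballP; exists d.
have [xy|yx] := leP x y.
  by rewrite distrC ger0_norm ?subr_ge0 ?cdf_of_nondecreasing// small_incr// ltrBlDl.
by rewrite ger0_norm ?subr_ge0 ?cdf_of_nondecreasing ?small_incr ?(ltW yx)// ltrBlDl -ltrBlDr.
Unshelve. all: by end_near.
Qed.

Lemma closed_cdf_of_preimage (D : set R) : closed D -> closed (F @^-1` D).
Proof. by apply: preimage_closed => x _; exact: cdf_of_continuous. Qed.

Lemma negligible_cdf_of_eq0 : mu.-negligible [set x | F x = 0 /\ f x != 0].
Proof.
pose A := [set x | F x = 0].
have A_negligible x : A x -> mu.-negligible (`]-oo, x] `&` [set y | f y != 0]).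
  move=> Ax; apply: Rintegral_ge0_eq0_negligible => //.
  - exact: pdf_integrable.
  - by move=> y _; exact: pdf_ge0.
have [ubA|unbA] := pselect (has_ubound A).
  have Asup : A (sup A).
    apply: closed_sup _ _ ubA; first exact: closed_cdf_of_preimage _ (closed_eq (y := _)).
    by exists (-1); apply: cdf_of_lt0; rewrite ltrN10.
  apply: negligibleS (A_negligible _ Asup) => x [Ax fx]; split => //=.
  by rewrite in_itv /=; exact: ub_le_sup.
have An (n : nat) : A n%:R.
  have [x Ax nx] : exists2 x, A x & n%:R <= x.
    apply: contra_notP unbA => nA; exists n%:R => x Ax; rewrite leNgt.
    by apply/negP => nx; apply: nA; exists x => //; exact: ltW.
  by apply/eqP; rewrite eq_le cdf_of_ge0 andbT -Ax cdf_of_nondecreasing.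
apply: negligibleS (negligible_bigcup (fun n => A_negligible _ (An n))) => x [Ax fx].
by exists (Num.truncn x).+1 => //; split => //=; rewrite in_itv /= ltW// truncnS_gt.
Qed.

Lemma negligible_cdf_of_eq1 : mu.-negligible [set x | F x = 1 /\ f x != 0].
Proof.
pose A := [set x | F x = 1].
have [A0|A0] := pselect (A !=set0); last first.
  by apply: negligibleS (negligible_set0 _) => x [Ax _]; apply: A0; exists x.
have lbA : lbound A 0.
  move=> x; rewrite /A /= leNgt; apply: contraPN => /cdf_of_lt0 ->.
  by move/eqP; rewrite eq_sym oner_eq0.
have Ainf : A (inf A).
  apply: closed_inf; first exact: closed_cdf_of_preimage _ (closed_eq (y := _)).
  - exact: A0.
  - by exists 0.
have : mu.-negligible (`[inf A, +oo[ `&` [set x | f x != 0]).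
  apply: Rintegral_ge0_eq0_negligible => //.
  - exact: pdf_integrable.
  - by move=> y _; exact: pdf_ge0.
  - by rewrite -Rintegral_itv_obnd_cbnd ?pdf_integrable// -onem_cdf_of Ainf subrr.
apply: negligibleS => x [Ax fx]; split => //=.
by rewrite in_itv /= andbT ge_inf//; exists 0.
Qed.

Lemma cdf_of_quantile x : 0 < F x -> F (quantile F (F x)) = F x.
Proof.
move=> Fx_gt0; pose E := [set y | F x <= F y].
have lbE : lbound E 0.
  by move=> y; apply: contraTT; rewrite -!ltNge => /cdf_of_lt0 ->.
have Einf : E (inf E).
  apply: closed_inf; first exact: closed_cdf_of_preimage _ (closed_ge (y := _)).
  - by exists x; rewrite /E /=.
  - by exists 0.
by apply/eqP; rewrite eq_le Einf andbT cdf_of_nondecreasing// ge_inf /E //=; exists 0.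
Qed.

End cdf_of_pdf.

Section distortion.
Context {R : realType}.
Implicit Types (q G : R -> R) (u : R).

Lemma distortion_derive1_ge0 q u : distortion q -> 0 < u < 1 -> 0 <= derive1 q u.
Proof.
move=> [_ [_ [_ [q_incr [_ q_der]]]]] u01.
apply: (@incr_derive1_ge0_itv R q true false 0 1) => // y.
by rewrite inE /= in_itv /=; exact: q_der.
Qed.

Lemma quantile_comp G q u : (forall x, 0 <= G x <= 1) ->
  {in `[0, 1] &, {homo q : x y / x < y}} -> 0 <= u <= 1 ->
  quantile (q \o G) (q u) = quantile G u.
Proof.
move=> G01 /le_mono_in q_mono u01; congr inf; apply/funext => x /=.
by rewrite q_mono ?in_itv/= ?G01.
Qed.

Lemma quantile_sys_cdf q f u : is_nonneg_pdf f -> distortion q -> 0 <= u <= 1 ->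
  quantile (sys_cdf q f) (q u) = quantile (cdf_of f) u.
Proof.
move=> hf [_ [_ [_ [q_incr _]]]] u01; apply: quantile_comp q_incr u01 => x.
by rewrite cdf_of_ge0 ?cdf_of_le1.
Qed.

Lemma psi_sys_cdf alpha q f x : is_nonneg_pdf f -> distortion q ->
  0 < cdf_of f x < 1 ->
  psi alpha (sys_cdf q f) (sys_pdf q f) (q (cdf_of f x)) =
  (derive1 q (cdf_of f x) * f (quantile (cdf_of f) (cdf_of f x))) `^ alpha.
Proof.
move=> hf dq /andP[Fx_gt0 Fx_lt1].
rewrite /psi (quantile_sys_cdf _ _ _ hf dq); last by rewrite !ltW.
by rewrite /sys_pdf (cdf_of_quantile hf _ Fx_gt0).
Qed.

End distortion.

Lemma powR_ratio_transfer {R : realType} (a1 a2 b c p : R) :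
  0 <= a1 -> 0 <= a2 -> 0 <= b -> 0 <= c ->
  (a2 * b) `^ p / (a1 * b) `^ p != 0 ->
  (a2 * b) `^ p / (a1 * b) `^ p * (a1 * c) `^ p = (a2 * c) `^ p.
Proof.
move=> a1_ge0 a2_ge0 b_ge0 c_ge0; rewrite !powRM//.
have [->|a1p_neq0] := eqVneq (a1 `^ p) 0; first by rewrite mul0r invr0 mulr0 eqxx.
have [->|bp_neq0] := eqVneq (b `^ p) 0; first by rewrite !mulr0 mul0r eqxx.
by move=> _; field; rewrite a1p_neq0 bp_neq0.
Qed.

Definition psi_ratio {R : realType} (alpha : R) (f q1 q2 : R -> R) (u : R) : R :=
  psi alpha (sys_cdf q2 f) (sys_pdf q2 f) (q2 u) /
  psi alpha (sys_cdf q1 f) (sys_pdf q1 f) (q1 u).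

Section distorted_lifetimes.
Context {R : realType} {f q1 q2 : R -> R} {alpha m M : R}.
Hypotheses (hf : is_nonneg_pdf f) (dq1 : distortion q1) (dq2 : distortion q2).
Hypotheses (alpha_neq0 : alpha != 0) (m_gt0 : 0 < m).
Hypothesis psi_ratio_bounds :
  forall u, 0 < u < 1 -> m <= psi_ratio alpha f q1 q2 u <= M.
Local Notation F := (cdf_of f).
Local Notation mu := (@lebesgue_measure R).
Local Notation g1 := (fun x => sys_pdf q1 f x `^ alpha).
Local Notation g2 := (fun x => sys_pdf q2 f x `^ alpha).

Lemma sys_pdf_powR_ratio x : 0 < F x < 1 ->
  psi_ratio alpha f q1 q2 (F x) * g1 x = g2 x.
Proof.
move=> Fx01; have /andP[m_le _] := psi_ratio_bounds _ Fx01.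
have : psi_ratio alpha f q1 q2 (F x) != 0 by rewrite gt_eqF// (lt_le_trans m_gt0).
rewrite /psi_ratio !psi_sys_cdf// /sys_pdf; apply: powR_ratio_transfer.
- exact: distortion_derive1_ge0.
- exact: distortion_derive1_ge0.
- exact: pdf_ge0.
- exact: pdf_ge0.
Qed.

(* [alpha != 0] is needed where [f x = 0], since [0 `^ 0 = 1]. *)
Lemma sys_pdf_powR_bounds x : (f x != 0 -> 0 < F x < 1) ->
  m * g1 x <= g2 x <= M * g1 x.
Proof.
move=> Fx01; have [fx0|/Fx01 {}Fx01] := eqVneq (f x) 0.
  by rewrite /sys_pdf fx0 !mulr0 powR0// !mulr0 lexx.
have /andP[m_le le_M] := psi_ratio_bounds _ Fx01.
by rewrite -sys_pdf_powR_ratio// !ler_wpM2r ?powR_ge0.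
Qed.

Lemma ae_sys_pdf_powR_bounds : {ae mu, forall x, m * g1 x <= g2 x <= M * g1 x}.
Proof.
apply: negligibleS (negligibleU (negligible_cdf_of_eq0 hf) (negligible_cdf_of_eq1 hf)).
move=> x /= bounds_fail; apply: contrapT => /not_orP[Fx_neq0 Fx_neq1].
apply: bounds_fail; apply: sys_pdf_powR_bounds => fx_neq0.
rewrite !lt_neqAle cdf_of_ge0// cdf_of_le1// !andbT; apply/andP; split.
- by apply/eqP => Fx0; apply: Fx_neq0.
- by apply/eqP => /esym Fx1; apply: Fx_neq1.
Qed.

Lemma Rintegral_sys_pdf_powR_bounds :
  mu.-integrable `[0, +oo[ (EFin \o g1) -> mu.-integrable `[0, +oo[ (EFin \o g2) ->
  m * \int[mu]_(x in `[0, +oo[) g1 x <= \int[mu]_(x in `[0, +oo[) g2 x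
    <= M * \int[mu]_(x in `[0, +oo[) g1 x.
Proof.
move=> int1 int2.
have mD : measurable (`[0, +oo[ : set (measurableTypeR R)) by exact: measurable_itv.
have M_ge0 : 0 <= M.
  have /andP[m_le le_M] := psi_ratio_bounds 2^-1 ltac:(apply/andP; split; lra).
  exact/ltW/(lt_le_trans m_gt0)/(le_trans m_le).
have intZ k : mu.-integrable `[0, +oo[ (EFin \o (fun x => k * sys_pdf q1 f x `^ alpha)).
  by apply: (eq_integrable mD _ _ _ (integrableZl mD k int1)) => x _; rewrite /= EFinM.
rewrite -[m * _](RintegralZl _ mD int1) -[M * _](RintegralZl _ mD int1).
apply/andP; split; apply: ae_ge0_le_Rintegral.
- exact: mD.
- exact: intZ.
- exact: int2.
- by move=> x _; rewrite mulr_ge0 ?powR_ge0 ?(ltW m_gt0).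
- by move=> x _; exact: powR_ge0.
- apply: negligibleS ae_sys_pdf_powR_bounds => x /= lo_fails /andP[lo _].
  by apply: lo_fails.
- exact: mD.
- exact: int2.
- exact: intZ.
- by move=> x _; exact: powR_ge0.
- by move=> x _; rewrite mulr_ge0 ?powR_ge0.
- apply: negligibleS ae_sys_pdf_powR_bounds => x /= hi_fails /andP[_ hi].
  by apply: hi_fails.
Qed.

End distorted_lifetimes.

Lemma le0_ger_powR {R : realType} (p : R) :
  p <= 0 -> {in Num.pos &, {homo (@powR R) ^~ p : x y /~ x <= y}}.
Proof.
move=> p_le0 x y; rewrite !posrE => x_gt0 y_gt0 yx.
rewrite -(opprK p) !(powRN _ (- p)) lef_pV2 ?posrE ?powR_gt0//.
by apply: (ge0_ler_powR (r := - p)); rewrite // ?oppr_ge0 // nnegrE ltW.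
Qed.

Definition renyi_igf_of {R : realType} (alpha beta I : R) : R :=
  (1 - alpha)^-1 * I `^ (beta - 1).

Section renyi_igf_of.
Context {R : realType}.
Variables alpha beta : R.
Local Notation Phi := (renyi_igf_of alpha beta).

Lemma renyi_igf_ofZ k I : 0 <= k -> 0 <= I -> k `^ (beta - 1) * Phi I = Phi (k * I).
Proof. by move=> k_ge0 I_ge0; rewrite /renyi_igf_of powRM// mulrCA. Qed.

Lemma renyi_igf_of_homo : (1 < alpha /\ beta <= 1) \/ (alpha < 1 /\ 1 <= beta) ->
  {in Num.pos &, {homo Phi : x y / x <= y}}.
Proof.
case=> -[alpha_cmp beta_cmp] x y x_gt0 y_gt0 xy; rewrite /renyi_igf_of.
- rewrite ler_nM2l ?invr_lt0 ?subr_lt0//.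
  by apply: (@le0_ger_powR _ (beta - 1)); rewrite ?subr_le0.
- rewrite ler_pM2l ?invr_gt0 ?subr_gt0//.
  by apply: (ge0_ler_powR (r := beta - 1)); rewrite // ?subr_ge0 // nnegrE ltW// -posrE.
Qed.

Lemma renyi_igf_of_anti : (1 < alpha /\ 1 <= beta) \/ (alpha < 1 /\ beta <= 1) ->
  {in Num.pos &, {homo Phi : x y /~ x <= y}}.
Proof.
case=> -[alpha_cmp beta_cmp] x y x_gt0 y_gt0 yx; rewrite /renyi_igf_of.
- rewrite ler_nM2l ?invr_lt0 ?subr_lt0//.
  by apply: (ge0_ler_powR (r := beta - 1)); rewrite // ?subr_ge0 // nnegrE ltW// -posrE.
- rewrite ler_pM2l ?invr_gt0 ?subr_gt0//.
  by apply: (@le0_ger_powR _ (beta - 1)); rewrite ?subr_le0.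
Qed.

Lemma renyi_igf_of_bounds {i s I1 I2 : R} :
  0 < i -> 0 <= s -> 0 <= I1 -> i * I1 <= I2 <= s * I1 ->
  (((1 < alpha /\ beta <= 1) \/ (alpha < 1 /\ 1 <= beta)) ->
     i `^ (beta - 1) * Phi I1 <= Phi I2 /\ Phi I2 <= s `^ (beta - 1) * Phi I1) /\
  (((1 < alpha /\ 1 <= beta) \/ (alpha < 1 /\ beta <= 1)) ->
     i `^ (beta - 1) * Phi I1 >= Phi I2 /\ Phi I2 >= s `^ (beta - 1) * Phi I1).
Proof.
move=> i_gt0 s_ge0 I1_ge0 /andP[iI1_le I2_le].
rewrite !renyi_igf_ofZ ?(ltW i_gt0)//.
have [I1_0|I1_neq0] := eqVneq I1 0.
  have I2_0 : I2 = 0.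
    by apply/eqP; move: iI1_le I2_le; rewrite eq_le I1_0 !mulr0 => -> ->.
  by rewrite I1_0 I2_0 !mulr0 lexx; split=> _.
have I1_gt0 : 0 < I1 by rewrite lt_neqAle eq_sym I1_neq0.
have iI1_gt0 : 0 < i * I1 by rewrite mulr_gt0.
have I2_gt0 : 0 < I2 := lt_le_trans iI1_gt0 iI1_le.
have sI1_gt0 : 0 < s * I1 := lt_le_trans I2_gt0 I2_le.
split=> [/renyi_igf_of_homo Phi_homo | /renyi_igf_of_anti Phi_anti].
- by split; apply: Phi_homo; rewrite ?posrE.
- by split; apply: Phi_anti; rewrite ?posrE.
Qed.

End renyi_igf_of.

Theorem proposition6p4 (R : realType) (f q1 q2 : R -> R) (alpha beta : R) :
  is_nonneg_pdf f ->
  distortion q1 -> distortion q2 ->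
  0 < alpha -> alpha != 1 -> 0 < beta ->
  (@lebesgue_measure R).-integrable `[0, +oo[%classic
     (EFin \o (fun x => sys_pdf q1 f x `^ alpha)) ->
  (@lebesgue_measure R).-integrable `[0, +oo[%classic
     (EFin \o (fun x => sys_pdf q2 f x `^ alpha)) ->
  let ratio := fun u => psi alpha (sys_cdf q2 f) (sys_pdf q2 f) (q2 u) /
                        psi alpha (sys_cdf q1 f) (sys_pdf q1 f) (q1 u) in
  let S := [set ratio u | u in `]0, 1[%classic] in
  has_ubound S -> has_lbound S -> 0 < inf S ->
  let gamma1 := inf S `^ (beta - 1) in
  let gamma2 := sup S `^ (beta - 1) in
  let R1 := renyi_igf alpha beta (sys_pdf q1 f) in
  let R2 := renyi_igf alpha beta (sys_pdf q2 f) in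
  (((1 < alpha /\ beta <= 1) \/ (alpha < 1 /\ 1 <= beta)) ->
     gamma1 * R1 <= R2 /\ R2 <= gamma2 * R1) /\
  (((1 < alpha /\ 1 <= beta) \/ (alpha < 1 /\ beta <= 1)) ->
     gamma1 * R1 >= R2 /\ R2 >= gamma2 * R1).
Proof.
move=> hf dq1 dq2 alpha_gt0 alpha_neq1 _ int1 int2 ratio S ubS lbS infS_gt0.
move=> gamma1 gamma2 R1 R2.
have S_ratio u : 0 < u < 1 -> S (ratio u) by move=> u01; exists u; rewrite ?in_itv.
have supS : has_sup S by split=> //; exists (ratio 2^-1); apply: S_ratio; lra.
have ratio_bounds u : 0 < u < 1 -> inf S <= psi_ratio alpha f q1 q2 u <= sup S.
  by move=> /S_ratio Su; rewrite ge_inf//= sup_upper_bound.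
have supS_ge0 : 0 <= sup S.
  have /andP[infS_le le_supS] := ratio_bounds 2^-1 ltac:(apply/andP; split; lra).
  exact/ltW/(lt_le_trans infS_gt0)/(le_trans infS_le).
have I1_ge0 : 0 <= \int[lebesgue_measure]_(x in `[0, +oo[) sys_pdf q1 f x `^ alpha.
  by apply: Rintegral_ge0 => x _; exact: powR_ge0.
have I_bounds := Rintegral_sys_pdf_powR_bounds hf dq1 dq2 (lt0r_neq0 alpha_gt0)
  infS_gt0 ratio_bounds int1 int2.
exact (renyi_igf_of_bounds alpha beta infS_gt0 supS_ge0 I1_ge0 I_bounds).
Qed.
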